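(* Let $r\ge0$ and let $f:A\to B$ be a morphism of finitely generated $E_r$-cofibrant dga's over a field $\mathbf{k}$ of characteristic $0$. The following are equivalent: (1) $f$ admits an $r$-splitting; (2) the morphism $E_r:\mathrm{Aut}_W(f)\to\mathrm{Aut}(E_r(f))$ is surjective; (3) there exist $\alpha\in\mathbf{k}^*$, not a root of unity, and $\Phi=(\Phi^A,\Phi^B)\in\mathrm{Aut}_W(f)$ such that $E_r(\Phi^A)$ and $E_r(\Phi^B)$ are the $r$-bigrading automorphisms of $E_r(A)$ and $E_r(B)$ associated with $\alpha$.
   Context: Filtered dga's: a filtered dga over $\mathbf{k}$ is a non-negatively graded commutative dga $A$ (differential of degree $+1$) with an increasing multiplicative regular exhaustive filtration $W$ by subcomplexes, with filtered unit. $E_r(A)$ is the spectral sequence of $(A,W)$ with $E_0^{-p,n+p}(A)=Gr^W_pA^n$, a bigraded dga. $\mathrm{Aut}_W(f)$ is the group of pairs $(F^A,F^B)$ of filtered dga automorphisms of $A$ and $B$ with $fF^A=F^Bf$; $\mathrm{Aut}(E_r(f))$ is the group of pairs of bigraded dga automorphisms $(G^A,G^B)$ of $E_r(A),E_r(B)$ with $E_r(f)G^A=G^BE_r(f)$; $E_r$ denotes the induced group morphism. For $\alpha\in\mathbf{k}^*$, the $r$-bigrading automorphism $\varphi_\alpha$ of $E_r(A)$ is $\varphi_\alpha(a)=\alpha^{nr+p}a$ for $a\in E_r^{-p,n+p}(A)$. $E_r$-cofibrant dga's: an $E_r$-cofibrant extension of degree $n$ and weight $p$ of a filtered dga $A$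 is $A\otimes_\xi\Lambda V$ with $V$ concentrated in degree $n$ and pure weight $p$ and $\xi:V\to W_{p-r}A^{n+1}$ linear with $d\xi=0$; $dv=\xi(v)$, filtration extended multiplicatively. An $E_r$-cofibrant dga is the colimit of a sequence of such extensions from $\mathbf{k}$; finitely generated means finitely many extensions with finite-dimensional $V$. $r$-splitting: an $r$-splitting of a filtered dga $A$ is a direct sum decomposition $A=\bigoplus_{p,q}A^{p,q}$ with $d(A^{p,q})\subset A^{p+r,q-r+1}$, $A^{p,q}\cdot A^{p',q'}\subset A^{p+p',q+q'}$ and $W_mA^n=\bigoplus_{p\le m}A^{-p,n+p}$; a morphism $f:A\to B$ admits an $r$-splitting if $A,B$ admit $r$-splittings and $f(A^{p,q})\subset B^{p,q}$. *)

From HB Require Import structures.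
From mathcomp Require Import all_boot all_order all_algebra.
Set Implicit Arguments. Unset Strict Implicit. Unset Printing Implicit Defensive.
Import Order.TTheory GRing.Theory Num.Theory.
Local Open Scope ring_scope.

Record fdga (k : fieldType) := FDGA {
  car :> algType k;
  hdeg : nat -> pred car;
  W : int -> pred car;
  dd : car -> car }.
Arguments hdeg {k} f n.
Arguments W {k} f p.
Arguments dd {k} f x.

Definition is_subspace (k : fieldType) (V : lmodType k) (P : pred V) : Prop :=
  0 \in P /\ forall (a : k) (x y : V), x \in P -> y \in P -> a *: x + y \in P.

Record is_fdga (k : fieldType) (A : fdga k) : Prop := {
  hdeg_sub : forall n, is_subspace (hdeg A n);
  hdeg_span : forall x : A, exists (N : nat) (xs : nat -> A),
      (forall i, xs i \in hdeg A i) /\ x = \sum_(i < N) xs i;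
  hdeg_indep : forall (N : nat) (xs : nat -> A), (forall i, xs i \in hdeg A i) ->
      \sum_(i < N) xs i = 0 -> forall i, (i < N)%N -> xs i = 0;
  one_hdeg : (1 : A) \in hdeg A 0;
  mul_hdeg : forall (p q : nat) (x y : A), x \in hdeg A p -> y \in hdeg A q ->
      x * y \in hdeg A (p + q)%N;
  gcomm : forall (p q : nat) (x y : A), x \in hdeg A p -> y \in hdeg A q ->
      x * y = (-1) ^+ (p * q)%N * (y * x);
  dd_lin : forall (a : k) (x y : A), dd A (a *: x + y) = a *: dd A x + dd A y;
  dd_hdeg : forall n (x : A), x \in hdeg A n -> dd A x \in hdeg A n.+1;
  dd_dd : forall x : A, dd A (dd A x) = 0;
  dd_leib : forall (p : nat) (x y : A), x \in hdeg A p ->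
      dd A (x * y) = dd A x * y + (-1) ^+ p * (x * dd A y);
  W_sub : forall p, is_subspace (W A p);
  W_graded : forall p (x : A), x \in W A p -> exists (N : nat) (xs : nat -> A),
      (forall i, xs i \in hdeg A i /\ xs i \in W A p) /\ x = \sum_(i < N) xs i;
  W_incr : forall p (x : A), x \in W A p -> x \in W A (p + 1);
  W_dd : forall p (x : A), x \in W A p -> dd A x \in W A p;
  W_mul : forall p q (x y : A), x \in W A p -> y \in W A q -> x * y \in W A (p + q);
  W_one : (1 : A) \in W A 0;
  W_reg : forall n, exists q, forall x : A, x \in hdeg A n -> x \in W A q -> x = 0;
  W_exh : forall x : A, exists p, x \in W A p }.

Record is_fmor (k : fieldType) (A B : fdga k) (f : A -> B) : Prop := {
  fm_lin : forall (a : k) (x y : A), f (a *: x + y) = a *: f x + f y;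
  fm_mul : forall x y : A, f (x * y) = f x * f y;
  fm_one : f 1 = 1;
  fm_deg : forall n (x : A), x \in hdeg A n -> f x \in hdeg B n;
  fm_dd : forall x : A, f (dd A x) = dd B (f x);
  fm_W : forall p (x : A), x \in W A p -> f x \in W B p }.

Definition is_fauto (k : fieldType) (A : fdga k) (F : A -> A) : Prop :=
  is_fmor F /\ exists G : A -> A, [/\ is_fmor G, cancel F G & cancel G F].

(* Index convention: (p, n) = weight p, total degree n, i.e. the term
   E_r^{-p, n+p}(A).  Deligne's formulas for an increasing filtration:
     Z_s^{p,n} = { x in W_p A^n : dx in W_{p-s} A^{n+1} },
     E_r^{p,n} = Z_r^{p,n} / (Z_{r-1}^{p-1,n} + d Z_{r-1}^{p+r-1,n-1}).
   (For r = 0 this gives Gr^W_p A^n.)  Br is the denominator. *)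
Definition Zr (k : fieldType) (A : fdga k) (s p : int) (n : nat) : pred A :=
  [pred x | [&& x \in hdeg A n, x \in W A p & dd A x \in W A (p - s)]].

Arguments Zr {k} A s p n.

Definition Br (k : fieldType) (A : fdga k) (r p : int) (n : nat) (x : A) : Prop :=
  exists y z : A, [/\ y \in Zr A (r - 1) (p - 1) n,
     z \in Zr A (r - 1) (p + r - 1) n.-1, (0 < n)%N || (z == 0) & x = y + dd A z].

Arguments Br {k} A r p n x.

(* A bigraded dga automorphism G of E_r(A), described by lifts:
   g p n : A -> A represents G on E_r^{-p,n+p}(A) = Zr/Br, i.e. G [x] = [g p n x]. *)
Record is_Er_aut (k : fieldType) (A : fdga k) (r : nat)
    (g : int -> nat -> A -> A) : Prop := {
  ea_Z : forall p n x, x \in Zr A r%:Z p n -> g p n x \in Zr A r%:Z p n;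
  ea_wd : forall p n x, x \in Zr A r%:Z p n -> Br A r%:Z p n x -> Br A r%:Z p n (g p n x);
  ea_lin : forall p n (a : k) x y, x \in Zr A r%:Z p n -> y \in Zr A r%:Z p n ->
      Br A r%:Z p n (g p n (a *: x + y) - (a *: g p n x + g p n y));
  ea_inj : forall p n x, x \in Zr A r%:Z p n -> Br A r%:Z p n (g p n x) -> Br A r%:Z p n x;
  ea_surj : forall p n y, y \in Zr A r%:Z p n ->
      exists2 x, x \in Zr A r%:Z p n & Br A r%:Z p n (g p n x - y);
  ea_d : forall p n x, x \in Zr A r%:Z p n ->
      Br A r%:Z (p - r%:Z) n.+1 (g (p - r%:Z) n.+1 (dd A x) - dd A (g p n x));
  ea_mul : forall p q n m x y, x \in Zr A r%:Z p n -> y \in Zr A r%:Z q m ->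
      Br A r%:Z (p + q) (n + m)%N (g (p + q) (n + m)%N (x * y) - g p n x * g q m y);
  ea_one : Br A r%:Z 0 0 (g 0 0 1 - 1) }.

Definition Er_compat (k : fieldType) (A B : fdga k) (r : nat) (f : A -> B)
    (gA : int -> nat -> A -> A) (gB : int -> nat -> B -> B) : Prop :=
  forall p n x, x \in Zr A r%:Z p n -> Br B r%:Z p n (f (gA p n x) - gB p n (f x)).

Definition Er_is (k : fieldType) (A : fdga k) (r : nat) (F : A -> A)
    (g : int -> nat -> A -> A) : Prop :=
  forall p n x, x \in Zr A r%:Z p n -> Br A r%:Z p n (F x - g p n x).

Definition bigrading (k : fieldType) (A : fdga k) (r : nat) (alpha : k) :
    int -> nat -> A -> A :=
  fun p n x => (alpha ^ ((n * r)%N%:Z + p)) *: x.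

Arguments bigrading {k} A r alpha p n x.

Record is_rsplitting (k : fieldType) (A : fdga k) (r : nat)
    (S : int -> int -> pred A) : Prop := {
  sp_sub : forall p q, is_subspace (S p q);
  sp_span : forall x : A, exists (s : seq (int * int)) (xs : int * int -> A),
      (forall i, xs i \in S i.1 i.2) /\ x = \sum_(i <- s) xs i;
  sp_indep : forall (s : seq (int * int)) (xs : int * int -> A), uniq s ->
      (forall i, xs i \in S i.1 i.2) -> \sum_(i <- s) xs i = 0 ->
      forall i, i \in s -> xs i = 0;
  sp_d : forall p q x, x \in S p q -> dd A x \in S (p + r%:Z) (q - r%:Z + 1);
  sp_mul : forall p q p' q' x y, x \in S p q -> y \in S p' q' ->
      x * y \in S (p + p') (q + q');
  sp_W : forall (m : int) (n : nat) (x : A),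
      (x \in hdeg A n /\ x \in W A m) <->
      exists (s : seq int) (xs : int -> A),
        (forall p, p \in s -> p <= m /\ xs p \in S (- p) (n%:Z + p)) /\
        x = \sum_(p <- s) xs p }.

Definition admits_rsplitting (k : fieldType) (A B : fdga k) (r : nat) (f : A -> B) : Prop :=
  exists (SA : int -> int -> pred A) (SB : int -> int -> pred B),
    [/\ is_rsplitting r SA, is_rsplitting r SB &
        forall p q x, x \in SA p q -> f x \in SB p q].

(* A finitely generated E_r-cofibrant dga is an iterated sequence of E_r-cofibrant
   extensions k (x)_xi LV_1 (x)_xi ... (x)_xi LV_N with V_j finite-dimensional;
   splitting each V_j into a basis, this is the same as an ordered family of
   homogeneous generators v_0,...,v_{m-1} (degree nd i, weight pw i) such that:
   the graded-commutative monomials in the v_i form a basis of A, W_q A is spanned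
   by the monomials of weight <= q (multiplicative extension of the filtration),
   and d v_i lies in W_{pw i - r} of the subalgebra generated by v_0..v_{i-1}. *)
Definition admissible (m : nat) (nd : 'I_m -> nat) (e : {ffun 'I_m -> nat}) : Prop :=
  forall i, odd (nd i) -> (e i <= 1)%N.

Definition monom (k : fieldType) (A : fdga k) (m : nat) (v : 'I_m -> A)
    (e : {ffun 'I_m -> nat}) : A := \prod_(i < m) v i ^+ e i.

Definition mweight (m : nat) (pw : 'I_m -> int) (e : {ffun 'I_m -> nat}) : int :=
  \sum_(i < m) (e i)%:Z * pw i.

Definition in_mspan (k : fieldType) (A : fdga k) (m : nat) (nd : 'I_m -> nat)
    (v : 'I_m -> A) (P : {ffun 'I_m -> nat} -> Prop) (x : A) : Prop :=
  exists (s : seq {ffun 'I_m -> nat}) (c : {ffun 'I_m -> nat} -> k),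
    (forall e, e \in s -> admissible nd e /\ P e) /\
    x = \sum_(e <- s) c e *: monom v e.

Definition is_fg_Er_cofibrant (k : fieldType) (A : fdga k) (r : nat) : Prop :=
  exists (m : nat) (v : 'I_m -> A) (nd : 'I_m -> nat) (pw : 'I_m -> int),
  [/\ forall i, v i \in hdeg A (nd i),
      (forall (s : seq {ffun 'I_m -> nat}) (c : {ffun 'I_m -> nat} -> k), uniq s ->
         (forall e, e \in s -> admissible nd e) ->
         \sum_(e <- s) c e *: monom v e = 0 -> forall e, e \in s -> c e = 0),
      (forall x : A, in_mspan nd v (fun _ => True) x),
      (forall (q : int) (x : A), x \in W A q <-> in_mspan nd v (fun e => mweight pw e <= q) x) &
      (forall i : 'I_m, dd A (v i) \in W A (pw i - r%:Z) /\
         in_mspan nd v (fun e => forall j : 'I_m, (i <= j)%N -> e j = 0) (dd A (v i)))].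

Definition Er_surjective (k : fieldType) (A B : fdga k) (r : nat) (f : A -> B) : Prop :=
  forall (gA : int -> nat -> A -> A) (gB : int -> nat -> B -> B),
    is_Er_aut r gA -> is_Er_aut r gB -> Er_compat r f gA gB ->
    exists (FA : A -> A) (FB : B -> B),
      [/\ is_fauto FA, is_fauto FB, (forall x, f (FA x) = FB (f x)),
          Er_is r FA gA & Er_is r FB gB].

Definition bigrading_lift (k : fieldType) (A B : fdga k) (r : nat) (f : A -> B) : Prop :=
  exists alpha : k, [/\ alpha != 0, (forall j, (0 < j)%N -> alpha ^+ j != 1) &
    exists (FA : A -> A) (FB : B -> B),
      [/\ is_fauto FA, is_fauto FB, (forall x, f (FA x) = FB (f x)),
          Er_is r FA (bigrading A r alpha) & Er_is r FB (bigrading B r alpha)]].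

(* The only consequence of finite generation and E_r-cofibrancy that is used
   is that d maps W_p into W_{p-r} ([fg_cofibrant_lowers_weight]).  Then the
   E_r page is Gr^W A: cycles of E_r^{-p,n+p} are the elements of W_p A^n and
   boundaries those of W_{p-1} A^n ([Zr_lowering], [Br_lowering]).
   - (1) => (2) [rsplitting_Er_surjective]: an r-splitting gives projections
     [proj (n, p)] onto its pieces (section [SplittingProjections]); an
     automorphism g of Gr^W A is lifted piecewise by [proj (n, p) o g] and the
     pieces are glued (section [LiftAutomorphism]).
   - (2) => (3) [Er_surjective_bigrading_lift]: take alpha = 2, which is not a
     root of unity in characteristic 0.
   - (3) => (1) [bigrading_lift_rsplitting]: a filtered lift Phi of phi_alpha
     is diagonalizable on each A^n with eigenvalues alpha^(nr+p), and its
     eigenspaces form an r-splitting (section [EigenSplitting]).  *)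
From HB Require Import structures.
From mathcomp Require Import all_boot all_order all_algebra.
From mathcomp Require Import zify.
From Stdlib Require Import ClassicalEpsilon.
Set Implicit Arguments. Unset Strict Implicit. Unset Printing Implicit Defensive.
Import Order.TTheory GRing.Theory Num.Theory.
Open Scope ring_scope.

Section Subspace.
Variables (k : fieldType) (V : lmodType k) (P : pred V).
Hypothesis P_sub : is_subspace P.

Lemma subspace0 : 0 \in P. Proof. by case: P_sub. Qed.

Lemma subspaceD x y : x \in P -> y \in P -> x + y \in P.
Proof. by move=> hx hy; have := P_sub.2 1 x y hx hy; rewrite scale1r. Qed.

Lemma subspaceZ a x : x \in P -> a *: x \in P.
Proof. by move=> hx; have := P_sub.2 a x 0 hx subspace0; rewrite addr0. Qed.

Lemma subspaceN x : x \in P -> - x \in P.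
Proof. by move=> hx; have := subspaceZ (-1) hx; rewrite scaleN1r. Qed.

Lemma subspaceB x y : x \in P -> y \in P -> x - y \in P.
Proof. by move=> hx hy; apply: subspaceD => //; apply: subspaceN. Qed.

Lemma subspace_sum (I : eqType) (s : seq I) (F : I -> V) :
  (forall i, i \in s -> F i \in P) -> \sum_(i <- s) F i \in P.
Proof.
elim: s => [|i s IH] H; first by rewrite big_nil subspace0.
rewrite big_cons; apply: subspaceD; first by apply: H; rewrite inE eqxx.
by apply: IH => j hj; apply: H; rewrite inE hj orbT.
Qed.
End Subspace.

Section LinearMap.
Variables (k : fieldType) (U V : lmodType k) (h : U -> V).
Hypothesis h_lin : forall a x y, h (a *: x + y) = a *: h x + h y.

Lemma lin0 : h 0 = 0.
Proof.
have := h_lin 1 0 0; rewrite !scale1r !addr0 => /eqP.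
by rewrite -{1}[h 0]addr0 (inj_eq (addrI _)) eq_sym => /eqP.
Qed.

Lemma linD x y : h (x + y) = h x + h y.
Proof. by have := h_lin 1 x y; rewrite !scale1r. Qed.

Lemma linZ a x : h (a *: x) = a *: h x.
Proof. by have := h_lin a x 0; rewrite !addr0 lin0 addr0. Qed.

Lemma linN x : h (- x) = - h x.
Proof. by rewrite -scaleN1r linZ scaleN1r. Qed.

Lemma linB x y : h (x - y) = h x - h y.
Proof. by rewrite linD linN. Qed.

Lemma lin_sum (I : Type) (s : seq I) (F : I -> U) :
  h (\sum_(i <- s) F i) = \sum_(i <- s) h (F i).
Proof.
elim: s => [|i s IH]; first by rewrite !big_nil lin0.
by rewrite !big_cons linD IH.
Qed.
End LinearMap.

Section FmorLinear.
Variables (k : fieldType) (A B : fdga k) (f : A -> B).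
Hypothesis f_mor : is_fmor f.

Lemma fmor0 : f 0 = 0. Proof. exact: (@lin0 k A B _ (fm_lin f_mor)). Qed.
Lemma fmorZ a x : f (a *: x) = a *: f x. Proof. exact: (@linZ k A B _ (fm_lin f_mor)). Qed.
Lemma fmorB x y : f (x - y) = f x - f y. Proof. exact: (@linB k A B _ (fm_lin f_mor)). Qed.
Lemma fmor_sum (I : Type) (s : seq I) (F : I -> A) :
  f (\sum_(i <- s) F i) = \sum_(i <- s) f (F i).
Proof. exact: (@lin_sum k A B _ (fm_lin f_mor)). Qed.
End FmorLinear.

Section FilteredDga.
Variables (k : fieldType) (A : fdga k).
Hypothesis hA : is_fdga A.

Lemma hdeg0 n : (0 : A) \in hdeg A n. Proof. exact: (@subspace0 k A _ (hdeg_sub hA n)). Qed.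
Lemma hdegD n (x y : A) : x \in hdeg A n -> y \in hdeg A n -> x + y \in hdeg A n.
Proof. exact: (@subspaceD k A _ (hdeg_sub hA n)). Qed.
Lemma hdegZ n a (x : A) : x \in hdeg A n -> a *: x \in hdeg A n.
Proof. exact: (@subspaceZ k A _ (hdeg_sub hA n)). Qed.
Lemma hdegN n (x : A) : x \in hdeg A n -> - x \in hdeg A n.
Proof. exact: (@subspaceN k A _ (hdeg_sub hA n)). Qed.
Lemma hdegB n (x y : A) : x \in hdeg A n -> y \in hdeg A n -> x - y \in hdeg A n.
Proof. exact: (@subspaceB k A _ (hdeg_sub hA n)). Qed.
Lemma hdeg_sum n (I : eqType) (s : seq I) (F : I -> A) :
  (forall i, i \in s -> F i \in hdeg A n) -> \sum_(i <- s) F i \in hdeg A n.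
Proof. exact: (@subspace_sum k A _ (hdeg_sub hA n)). Qed.

Lemma W0 p : (0 : A) \in W A p. Proof. exact: (@subspace0 k A _ (W_sub hA p)). Qed.
Lemma WD p (x y : A) : x \in W A p -> y \in W A p -> x + y \in W A p.
Proof. exact: (@subspaceD k A _ (W_sub hA p)). Qed.
Lemma WZ p a (x : A) : x \in W A p -> a *: x \in W A p.
Proof. exact: (@subspaceZ k A _ (W_sub hA p)). Qed.
Lemma WN p (x : A) : x \in W A p -> - x \in W A p.
Proof. exact: (@subspaceN k A _ (W_sub hA p)). Qed.
Lemma WB p (x y : A) : x \in W A p -> y \in W A p -> x - y \in W A p.
Proof. exact: (@subspaceB k A _ (W_sub hA p)). Qed.
Lemma W_sum p (I : eqType) (s : seq I) (F : I -> A) :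
  (forall i, i \in s -> F i \in W A p) -> \sum_(i <- s) F i \in W A p.
Proof. exact: (@subspace_sum k A _ (W_sub hA p)). Qed.

Lemma dd0 : dd A 0 = 0. Proof. exact: (@lin0 k A A _ (dd_lin hA)). Qed.
Lemma ddD x y : dd A (x + y) = dd A x + dd A y. Proof. exact: (@linD k A A _ (dd_lin hA)). Qed.
Lemma ddZ a x : dd A (a *: x) = a *: dd A x. Proof. exact: (@linZ k A A _ (dd_lin hA)). Qed.
Lemma dd_sum (I : Type) (s : seq I) (F : I -> A) :
  dd A (\sum_(i <- s) F i) = \sum_(i <- s) dd A (F i).
Proof. exact: (@lin_sum k A A _ (dd_lin hA)). Qed.

Lemma W_le p q (x : A) : p <= q -> x \in W A p -> x \in W A q.
Proof.
move=> le_pq hx; have -> : q = p + (`|q - p|%N)%:Z.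
  by rewrite gez0_abs ?subr_ge0 // addrCA subrr addr0.
elim: `|q - p|%N => [|j IH]; first by rewrite addr0.
by rewrite -addn1 PoszD addrA; apply: (W_incr hA).
Qed.

Lemma dd1 : dd A 1 = 0.
Proof.
have := dd_leib hA 1 (one_hdeg hA); rewrite !mul1r mulr1 => /eqP.
by rewrite -{1}[dd A 1]addr0 (inj_eq (addrI _)) eq_sym => /eqP.
Qed.

Lemma sign_mul_subspace (V : pred A) n (x : A) : is_subspace V -> x \in V ->
  (-1) ^+ n * x \in V.
Proof.
move=> V_sub hx; rewrite -signr_odd.
by case: (odd n); rewrite ?expr1 ?expr0 ?mulN1r ?mul1r //; apply: subspaceN.
Qed.
End FilteredDga.

Definition lowers_weight (k : fieldType) (A : fdga k) (r : nat) : Prop :=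
  forall p (x : A), x \in W A p -> dd A x \in W A (p - r%:Z).

Section Cofibrant.
Variables (k : fieldType) (A : fdga k) (r : nat).
Hypothesis hA : is_fdga A.

(* [x] is homogeneous, of weight <= w, with [dx] of weight <= w - r; this
   property is stable under products, so it holds for all monomials in
   generators enjoying it. *)
Definition weight_bounded (w : int) (x : A) : Prop :=
  exists n, [/\ x \in hdeg A n, x \in W A w & dd A x \in W A (w - r%:Z)].

Lemma weight_bounded1 : weight_bounded 0 1.
Proof. by exists 0%N; rewrite dd1 // one_hdeg // W_one // W0. Qed.

Lemma weight_boundedM w1 w2 x y :
  weight_bounded w1 x -> weight_bounded w2 y -> weight_bounded (w1 + w2) (x * y).
Proof.
move=> [n1 [x_n1 x_w1 dx_w1]] [n2 [y_n2 y_w2 dy_w2]].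
exists (n1 + n2)%N; split; [exact: mul_hdeg|exact: W_mul|].
rewrite (dd_leib hA _ x_n1); apply: WD => //.
  by have := W_mul hA dx_w1 y_w2; rewrite addrAC.
by apply: sign_mul_subspace (W_sub hA _) _; have := W_mul hA x_w1 dy_w2; rewrite addrA.
Qed.

Lemma weight_bounded_le w w' x : w <= w' -> weight_bounded w x -> weight_bounded w' x.
Proof.
move=> le_w [n [x_n x_w dx_w]]; exists n; split => //.
  exact: (W_le hA le_w x_w).
by apply: (W_le hA _ dx_w); rewrite lerD2r.
Qed.

Lemma weight_boundedX w x j : weight_bounded w x -> weight_bounded (j%:Z * w) (x ^+ j).
Proof.
move=> x_w; elim: j => [|j IH]; first by rewrite mul0r expr0; exact: weight_bounded1.
by rewrite exprS -addn1 PoszD mulrDl mul1r addrC; apply: weight_boundedM.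
Qed.

(* In a finitely generated E_r-cofibrant dga, each generator [v_i] has [dv_i] in
   weight [pw_i - r], hence so does every monomial and every element of [W_q]. *)
Lemma fg_cofibrant_lowers_weight : is_fg_Er_cofibrant A r -> lowers_weight A r.
Proof.
move=> [m [v [nd [pw [v_deg _ _ W_span dv]]]]].
(* [v_i] is the monomial whose exponent is the indicator of [i] *)
have gen_bounded i : weight_bounded (pw i) (v i).
  exists (nd i); split; [exact: v_deg| |exact: (dv i).1].
  apply/W_span; exists [:: [ffun j => nat_of_bool (j == i)]], (fun _ => 1); split.
    move=> e; rewrite inE => /eqP ->; split.
      by move=> j _; rewrite ffunE; case: (j == i).
    rewrite /mweight (bigD1 i) //= big1 ?ffunE ?eqxx ?addr0 ?mul1r //.
    by move=> j /negbTE hj; rewrite ffunE hj mul0r.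
  rewrite big_cons big_nil addr0 scale1r /monom.
  rewrite (eq_bigr (fun j => if j == i then v j else 1)); last first.
    by move=> j _; rewrite ffunE; case: (j == i); rewrite ?expr1 ?expr0.
  by rewrite -big_mkcond big_pred1_eq.
have monom_bounded e : weight_bounded (mweight pw e) (monom v e).
  apply: (big_rec2 (fun (x : A) (w : int) => weight_bounded w x)).
    exact: weight_bounded1.
  by move=> i y1 y2 _ hy; apply: weight_boundedM => //; apply: weight_boundedX.
move=> q x /W_span [s [c [hs ->]]]; rewrite dd_sum //; apply: W_sum => // e /hs [_ le].
rewrite ddZ //; apply: WZ => //.
by have [n [_ _ ->]] := weight_bounded_le le (monom_bounded e).
Qed.
End Cofibrant.

(* When [d] lowers weight by [r], the E_r page is [Gr^W A]: a cycle of
   E_r^{-p,n+p} is any element of [W_p A^n], and it is a boundary iff it lies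
   in [W_{p-1} A^n]. *)
Section ErPage.
Variables (k : fieldType) (A : fdga k) (r : nat).
Hypothesis hA : is_fdga A.
Hypothesis lowA : lowers_weight A r.

Lemma Zr_lowering p n (x : A) : (x \in Zr A r%:Z p n) = (x \in hdeg A n) && (x \in W A p).
Proof.
rewrite /Zr inE /=; case: (x \in hdeg A n) => //=.
by apply/andP/idP => [[]//|h]; split => //; apply: lowA.
Qed.

Lemma Br_lowering p n (x : A) :
  Br A r%:Z p n x <-> (x \in hdeg A n /\ x \in W A (p - 1)).
Proof.
split.
- move=> [y [z [hy hz hn ->]]].
  move: hy; rewrite /Zr inE /= => /and3P [y_n y_W _].
  move: hz; rewrite /Zr inE /= => /and3P [z_n z_W _].
  split; [apply: hdegD => //|apply: WD => //].
    case/orP: hn => [n0|/eqP ->]; last by rewrite dd0 // hdeg0.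
    by have := dd_hdeg hA z_n; rewrite prednK.
  apply: (W_le hA _ (lowA z_W)); lia.
- move=> [x_n x_W]; exists x, 0; split.
  + rewrite /Zr inE /= x_n x_W /=; apply: (W_le hA _ (lowA x_W)); lia.
  + by rewrite /Zr inE /= (dd0 hA) (hdeg0 hA) !(W0 hA).
  + by rewrite eqxx orbT.
  + by rewrite dd0 // addr0.
Qed.

Lemma Br0 p n : Br A r%:Z p n 0.
Proof. by apply/Br_lowering; rewrite hdeg0 // W0. Qed.

Definition bigrading_factor (alpha : k) (n : nat) (p : int) : k :=
  alpha ^ ((n * r)%N%:Z + p).

Lemma bigrading_is_Er_aut (alpha : k) : alpha != 0 -> is_Er_aut r (bigrading A r alpha).
Proof.
move=> a0; have l0 n p : bigrading_factor alpha n p != 0 by rewrite expfz_neq0.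
have Z_scale p n c x : x \in Zr A r%:Z p n -> c *: x \in Zr A r%:Z p n.
  by rewrite !Zr_lowering => /andP [x_n x_W]; rewrite hdegZ // WZ.
have B_scale p n c x : Br A r%:Z p n x -> Br A r%:Z p n (c *: x).
  by move=> /Br_lowering [x_n x_W]; apply/Br_lowering; rewrite hdegZ // WZ.
rewrite /bigrading; split.
- by move=> p n x; apply: Z_scale.
- by move=> p n x _; apply: B_scale.
- move=> p n a x y _ _; rewrite scalerDr !scalerA mulrC subrr; exact: Br0.
- move=> p n x _ /(B_scale _ _ (bigrading_factor alpha n p)^-1).
  by rewrite scalerA (mulVf (l0 n p)) scale1r.
- move=> p n y hy; exists ((bigrading_factor alpha n p)^-1 *: y); first exact: Z_scale.
  by rewrite scalerA (mulfV (l0 n p)) scale1r subrr; exact: Br0.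
- move=> p n x _; rewrite ddZ //.
  have -> : (n.+1 * r)%N%:Z + (p - r%:Z) = (n * r)%N%:Z + p by lia.
  rewrite subrr; exact: Br0.
- move=> p q n m x y _ _; rewrite -scalerAl -scalerAr scalerA -expfzDr //.
  have -> : ((n + m) * r)%N%:Z + (p + q) = ((n * r)%N%:Z + p) + ((m * r)%N%:Z + q) by lia.
  rewrite subrr; exact: Br0.
- by rewrite mul0n addr0 expr0z scale1r subrr; exact: Br0.
Qed.
End ErPage.

Lemma sum_over_support (I : eqType) (V : zmodType) (c : I -> V) (s t : seq I) :
  uniq s -> uniq t -> (forall j, j \notin s -> c j = 0) -> {subset s <= t} ->
  \sum_(j <- t) c j = \sum_(j <- s) c j.
Proof.
move=> s_uniq t_uniq c_supp s_t.
rewrite (bigID (fun j => j \in s)) /= [X in _ + X]big1 ?addr0; last first.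
  by move=> j /negbTE j_s; apply: c_supp; rewrite j_s.
rewrite -big_filter; apply: perm_big; apply: uniq_perm => //; first exact: filter_uniq.
by move=> j; rewrite mem_filter; case: (boolP (j \in s)) => // /s_t ->.
Qed.

Section SplittingProjections.
Variables (k : fieldType) (A : fdga k) (r : nat) (S : int -> int -> pred A).
Hypothesis hA : is_fdga A.
Hypothesis hS : is_rsplitting r S.

(* The piece of degree [j.1] and weight [j.2]. *)
Definition piece (j : nat * int) : pred A := S (- j.2) (j.1%:Z + j.2).

Lemma piece_sub j : is_subspace (piece j). Proof. exact: (sp_sub hS (- j.2) (j.1%:Z + j.2)). Qed.
Lemma piece0 j : (0 : A) \in piece j. Proof. exact: (subspace0 (piece_sub j)). Qed.
Lemma pieceD j (x y : A) : x \in piece j -> y \in piece j -> x + y \in piece j.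
Proof. exact: (subspaceD (piece_sub j)). Qed.
Lemma pieceZ j a (x : A) : x \in piece j -> a *: x \in piece j.
Proof. exact: (subspaceZ (piece_sub j)). Qed.
Lemma pieceB j (x y : A) : x \in piece j -> y \in piece j -> x - y \in piece j.
Proof. exact: (subspaceB (piece_sub j)). Qed.

Lemma piece_hdeg_W j x : x \in piece j -> x \in hdeg A j.1 /\ x \in W A j.2.
Proof.
move=> x_j; apply/(sp_W hS); exists [:: j.2], (fun _ => x); split.
  by move=> p; rewrite inE => /eqP ->.
by rewrite big_cons big_nil addr0.
Qed.

Lemma pieceM i i' x y : x \in piece i -> y \in piece i' ->
  x * y \in piece ((i.1 + i'.1)%N, i.2 + i'.2).
Proof.
move=> x_i y_i'; have := sp_mul hS x_i y_i'; rewrite /piece /= -opprD.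
by have -> : i.1%:Z + i.2 + (i'.1%:Z + i'.2) = (i.1 + i'.1)%N%:Z + (i.2 + i'.2) by lia.
Qed.

Lemma piece_d i x : x \in piece i -> dd A x \in piece (i.1.+1, i.2 - r%:Z).
Proof.
move=> x_i; have := sp_d hS x_i; rewrite /piece /= opprB addrC.
by have -> : i.1%:Z + i.2 - r%:Z + 1 = (i.1.+1)%:Z + (i.2 - r%:Z) by lia.
Qed.

Lemma piece_indep (s : seq (nat * int)) (c : nat * int -> A) : uniq s ->
  (forall j, c j \in piece j) -> \sum_(j <- s) c j = 0 -> forall j, j \in s -> c j = 0.
Proof.
move=> s_uniq c_piece c_sum j j_s.
pose idx (j : nat * int) := (- j.2, j.1%:Z + j.2).
pose xs (i : int * int) := if 0 <= i.1 + i.2 then c (absz (i.1 + i.2), - i.1) else 0.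
have xs_idx i : xs (idx i) = c i.
  by case: i => n p; rewrite /xs /idx /= (_ : - p + (n%:Z + p) = n%:Z) ?opprK //; lia.
have xs_S i : xs i \in S i.1 i.2.
  case: i => a b; rewrite /xs /=; case: ifP => ab_ge0; last exact: (subspace0 (sp_sub hS a b)).
  have := c_piece (absz (a + b), - a); rewrite /piece /= opprK gez0_abs //.
  by rewrite (_ : a + b - a = b) //; lia.
have idx_uniq : uniq (map idx s).
  rewrite map_inj_uniq // => [[n p] [n' p']]; rewrite /idx /= => [[e1 e2]].
  by congr pair; lia.
rewrite -xs_idx; apply: (sp_indep hS idx_uniq xs_S); last exact: map_f.
by rewrite big_map (eq_bigr _ (fun i _ => xs_idx i)).
Qed.

Definition decomposes (x : A) (c : nat * int -> A) : Prop := exists s : seq (nat * int),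
  [/\ uniq s, forall j, j \notin s -> c j = 0, forall j, c j \in piece j &
      x = \sum_(j <- s) c j].

Lemma decomposes0 : decomposes 0 (fun _ => 0).
Proof. by exists [::]; split => // [j|]; [exact: piece0|rewrite big_nil]. Qed.

Lemma decomposesD x y c c' :
  decomposes x c -> decomposes y c' -> decomposes (x + y) (fun j => c j + c' j).
Proof.
move=> [s [s_uniq s_supp c_piece ->]] [s' [s'_uniq s'_supp c'_piece ->]].
exists (undup (s ++ s')); split.
- exact: undup_uniq.
- move=> j; rewrite mem_undup mem_cat negb_or => /andP [j_s j_s'].
  by rewrite s_supp // s'_supp // addr0.
- by move=> j; apply: pieceD.
rewrite big_split /= (@sum_over_support _ _ c s (undup (s ++ s'))) ?undup_uniq //; last first.
  by move=> j j_s; rewrite mem_undup mem_cat j_s.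
rewrite (@sum_over_support _ _ c' s' (undup (s ++ s'))) ?undup_uniq // => j j_s'.
by rewrite mem_undup mem_cat j_s' orbT.
Qed.

Lemma decomposesZ a x c : decomposes x c -> decomposes (a *: x) (fun j => a *: c j).
Proof.
move=> [s [s_uniq s_supp c_piece ->]]; exists s; split => //.
- by move=> j /s_supp ->; rewrite scaler0.
- by move=> j; apply: pieceZ.
by rewrite scaler_sumr.
Qed.

Lemma decomposes_piece j y : y \in piece j -> decomposes y (fun i => if i == j then y else 0).
Proof.
move=> y_j; exists [:: j]; split => //.
- by move=> i; rewrite inE => /negbTE ->.
- by move=> i; case: eqP => [->|_] //; exact: piece0.
by rewrite big_cons big_nil eqxx addr0.
Qed.

Lemma decomposes_unique x c c' : decomposes x c -> decomposes x c' -> c =1 c'.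
Proof.
move=> [s [s_uniq s_supp c_piece x_sum]] [s' [s'_uniq s'_supp c'_piece x_sum']].
pose t := undup (s ++ s').
have t_sum : \sum_(j <- t) (c j - c' j) = 0.
  rewrite sumrB (@sum_over_support _ _ c s t) ?undup_uniq //; last first.
    by move=> j j_s; rewrite mem_undup mem_cat j_s.
  rewrite (@sum_over_support _ _ c' s' t) ?undup_uniq //; last first.
    by move=> j j_s'; rewrite mem_undup mem_cat j_s' orbT.
  by rewrite -x_sum -x_sum' subrr.
have diff_piece j : c j - c' j \in piece j by apply: pieceB.
move=> j; apply/eqP; rewrite -subr_eq0; apply/eqP.
case: (boolP (j \in t)) => j_t; first exact: piece_indep (undup_uniq _) diff_piece t_sum j j_t.
move: j_t; rewrite mem_undup mem_cat negb_or => /andP [j_s j_s'].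
by rewrite s_supp // s'_supp // subrr.
Qed.

(* Every element decomposes: split it into homogeneous components, and each of
   them into pieces by the filtration axiom of the splitting. *)
Lemma decomposes_exists x : exists c, decomposes x c.
Proof.
have sum_dec (J : eqType) (js : seq J) (F : J -> A) :
    (forall j, j \in js -> exists c, decomposes (F j) c) ->
    exists c, decomposes (\sum_(j <- js) F j) c.
  elim: js => [|j js IH] F_dec; first by exists (fun _ => 0); rewrite big_nil; exact: decomposes0.
  have [c c_dec] := IH (fun i i_js => F_dec i (ltac:(by rewrite inE i_js orbT))).
  have [c' c'_dec] := F_dec j (mem_head _ _); rewrite big_cons.
  by exists (fun i => c' i + c i); apply: decomposesD.
have [N [xs [xs_deg ->]]] := hdeg_span hA x.
apply: (sum_dec) => i _; have [m xs_W] := W_exh hA (xs i).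
have [s [ys [ys_piece ->]]] := (sp_W hS m i (xs i)).1 (conj (xs_deg i) xs_W).
apply: (sum_dec) => p p_s; exists (fun j => if j == (i : nat, p) then ys p else 0).
by apply: decomposes_piece; exact: (ys_piece p p_s).2.
Qed.

Definition proj (j : nat * int) (x : A) : A :=
  proj1_sig (constructive_indefinite_description _ (decomposes_exists x)) j.

Lemma proj_decomposes x : decomposes x (fun j => proj j x).
Proof. by rewrite /proj; case: (constructive_indefinite_description _ _). Qed.

Lemma proj_eq x c : decomposes x c -> forall j, proj j x = c j.
Proof. by move=> x_c j; apply: (decomposes_unique (proj_decomposes x) x_c). Qed.

Lemma proj_piece j x : proj j x \in piece j.
Proof. by have [s [_ _ ? _]] := proj_decomposes x. Qed.

Lemma proj_on_piece j j' y : y \in piece j' -> proj j y = if j == j' then y else 0.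
Proof. by move=> y_j'; rewrite (proj_eq (decomposes_piece y_j')). Qed.

Lemma proj_idem j x : proj j (proj j x) = proj j x.
Proof. by rewrite (proj_on_piece j (proj_piece j x)) eqxx. Qed.

Lemma projD j x y : proj j (x + y) = proj j x + proj j y.
Proof. by rewrite (proj_eq (decomposesD (proj_decomposes x) (proj_decomposes y))). Qed.

Lemma projZ j a x : proj j (a *: x) = a *: proj j x.
Proof. by rewrite (proj_eq (decomposesZ a (proj_decomposes x))). Qed.

Lemma proj_lin j a x y : proj j (a *: x + y) = a *: proj j x + proj j y.
Proof. by rewrite projD projZ. Qed.

Lemma projB j x y : proj j (x - y) = proj j x - proj j y.
Proof. exact: (linB (proj_lin j)). Qed.

Lemma proj_sum j (I : Type) (s : seq I) (F : I -> A) :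
  proj j (\sum_(i <- s) F i) = \sum_(i <- s) proj j (F i).
Proof. exact: (lin_sum (proj_lin j)). Qed.

Lemma proj_ext x y : (forall j, proj j x = proj j y) -> x = y.
Proof.
move=> eq_xy; apply/eqP; rewrite -subr_eq0; apply/eqP.
have [s [_ _ _ ->]] := proj_decomposes (x - y).
by rewrite big1 // => j _; rewrite projB eq_xy subrr.
Qed.

Lemma proj_vanish n m x j : x \in hdeg A n -> x \in W A m -> (j.1 != n) || (m < j.2) ->
  proj j x = 0.
Proof.
move=> x_n x_m j_out; have [s [xs [xs_piece ->]]] := (sp_W hS m n x).1 (conj x_n x_m).
rewrite proj_sum big1_seq // => p /andP [_ p_s]; have [le_pm p_piece] := xs_piece p p_s.
rewrite (proj_on_piece j (j' := (n, p)) p_piece); case: eqP => // ej.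
by move: j_out; rewrite ej /= eqxx /= ltNge le_pm.
Qed.

Lemma proj_W_vanish m x j : x \in W A m -> m < j.2 -> proj j x = 0.
Proof.
move=> x_m lt_mj; have [N [xs [xs_hW ->]]] := W_graded hA x_m.
rewrite proj_sum big1 // => i _; have [x_i x_W] := xs_hW i.
by apply: (proj_vanish x_i x_W); rewrite lt_mj orbT.
Qed.

Lemma proj_hdeg_vanish n x j : x \in hdeg A n -> j.1 != n -> proj j x = 0.
Proof.
by move=> x_n j_n; have [m x_m] := W_exh hA x; apply: (proj_vanish x_n x_m); rewrite j_n.
Qed.

Lemma proj_top_W n m x : x \in hdeg A n -> x \in W A m -> proj (n, m) x = 0 ->
  x \in W A (m - 1).
Proof.
move=> x_n x_m; have [s [xs [xs_piece x_sum]]] := (sp_W hS m n x).1 (conj x_n x_m).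
have proj_x : proj (n, m) x = \sum_(p <- s | p == m) xs p.
  rewrite x_sum proj_sum [RHS]big_mkcond /=; apply: eq_big_seq => p p_s.
  rewrite (proj_on_piece _ (j' := (n, p)) (xs_piece p p_s).2) /=.
  by case: eqP => [[->]|]; [rewrite eqxx|case: eqP => // ->].
rewrite proj_x => top0; rewrite x_sum (bigID (fun p => p == m)) /= top0 add0r.
rewrite -big_filter; apply: W_sum => // p; rewrite mem_filter => /andP [p_m p_s].
have [le_pm p_piece] := xs_piece p p_s; have [_ p_W] := @piece_hdeg_W (n, p) _ p_piece.
by apply: (W_le hA _ p_W); move: p_m le_pm => /=; lia.
Qed.

Lemma proj_remainder n m x : x \in hdeg A n -> x \in W A m ->
  x - proj (n, m) x \in hdeg A n /\ x - proj (n, m) x \in W A (m - 1).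
Proof.
move=> x_n x_m; have [p_n p_m] := piece_hdeg_W (proj_piece (n, m) x).
have rem_n : x - proj (n, m) x \in hdeg A n by apply: hdegB.
split => //; apply: (proj_top_W rem_n); first by apply: WB.
by rewrite projB proj_idem subrr.
Qed.

(* The top-weight projection is multiplicative: lower-weight remainders only
   contribute in lower weight. *)
Lemma proj_mul n n' p q u v : u \in hdeg A n -> u \in W A p -> v \in hdeg A n' -> v \in W A q ->
  proj ((n + n')%N, p + q) (u * v) = proj (n, p) u * proj (n', q) v.
Proof.
move=> u_n u_p v_n v_q; set pu := proj (n, p) u; set pv := proj (n', q) v.
have [ru_n ru_W] := proj_remainder u_n u_p; have [rv_n rv_W] := proj_remainder v_n v_q.
have [pu_n pu_W] := piece_hdeg_W (proj_piece (n, p) u).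
have [pv_n pv_W] := piece_hdeg_W (proj_piece (n', q) v).
have -> : u * v = pu * pv + (pu * (v - pv) + ((u - pu) * pv + (u - pu) * (v - pv))).
  by rewrite -mulrDr [pv + _]addrC subrK addrA -mulrDr [pv + _]addrC subrK -mulrDl
    [pu + _]addrC subrK.
rewrite !projD (proj_on_piece _ (pieceM (proj_piece (n, p) u) (proj_piece (n', q) v))) /= eqxx.
have low z : z \in hdeg A (n + n') -> z \in W A (p + q - 1) -> proj ((n + n')%N, p + q) z = 0.
  by move=> z_n z_W; apply: (proj_vanish z_n z_W); rewrite /= ltrBlDr ltrDl ltr01 orbT.
have le_w : p - 1 + (q - 1) <= p + q - 1 by rewrite addrACA lerD2l gerDl lerN10.
rewrite (low (pu * (v - pv))) ?mul_hdeg //; last by rewrite -addrA W_mul.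
rewrite (low ((u - pu) * pv)) ?mul_hdeg //; last by rewrite addrAC W_mul.
rewrite (low ((u - pu) * (v - pv))) ?mul_hdeg //; last exact: (W_le hA le_w (W_mul hA ru_W rv_W)).
by rewrite !addr0.
Qed.

Lemma proj_dd (lowA : lowers_weight A r) n p u : u \in hdeg A n -> u \in W A p ->
  proj (n.+1, p - r%:Z) (dd A u) = dd A (proj (n, p) u).
Proof.
move=> u_n u_p; have [ru_n ru_W] := proj_remainder u_n u_p.
have -> : dd A u = dd A (proj (n, p) u) + dd A (u - proj (n, p) u) by rewrite -ddD // addrC subrK.
rewrite projD (proj_on_piece _ (piece_d (proj_piece (n, p) u))) /= eqxx.
rewrite (proj_vanish (dd_hdeg hA ru_n) (lowA _ _ ru_W)) ?addr0 //.
by apply/orP; right; rewrite /=; lia.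
Qed.

Lemma proj_one : proj (0%N, 0) 1 = 1.
Proof.
have unit_left j y : y \in piece j -> proj (0%N, 0) 1 * y = y.
  case: j => n p y_j; have [y_n y_W] := piece_hdeg_W y_j.
  have := proj_mul (one_hdeg hA) (W_one hA) y_n y_W.
  by rewrite add0n add0r mul1r (proj_on_piece (n, p) y_j) eqxx => <-.
have [s [_ _ _ one_sum]] := proj_decomposes 1.
have : proj (0%N, 0) 1 * (\sum_(j <- s) proj j 1) = \sum_(j <- s) proj j 1.
  by rewrite mulr_sumr; apply: eq_bigr => j _; apply: unit_left; exact: proj_piece.
by rewrite -one_sum mulr1.
Qed.

Lemma support_exists x : exists s : seq (nat * int), uniq s /\ forall j, j \notin s -> proj j x = 0.
Proof. by have [s [s_uniq s_supp _ _]] := proj_decomposes x; exists s. Qed.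

Definition support x : seq (nat * int) :=
  proj1_sig (constructive_indefinite_description _ (support_exists x)).

Lemma supportP x : uniq (support x) /\ forall j, j \notin support x -> proj j x = 0.
Proof. by rewrite /support; case: (constructive_indefinite_description _ _). Qed.

Section Glue.
Variable T : nat * int -> A -> A.
Hypothesis T0 : forall j, T j 0 = 0.
Hypothesis T_piece : forall j x, x \in piece j -> T j x \in piece j.

Definition glue (x : A) : A := \sum_(j <- support x) T j (proj j x).

Lemma proj_glue j x : proj j (glue x) = T j (proj j x).
Proof.
have [s_uniq s_supp] := supportP x; rewrite /glue proj_sum.
case: (boolP (j \in support x)) => j_s.
  rewrite (bigD1_seq j) //= (proj_on_piece _ (T_piece (proj_piece j x))) eqxx big1 ?addr0 //.
  by move=> i /negbTE i_j; rewrite (proj_on_piece _ (T_piece (proj_piece i x))) eq_sym i_j.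
rewrite big1_seq; first by rewrite s_supp // T0.
move=> i /andP [_ i_s]; rewrite (proj_on_piece _ (T_piece (proj_piece i x))).
by case: eqP => // e; move: j_s; rewrite e i_s.
Qed.

Lemma glue_piece j y : y \in piece j -> glue y = T j y.
Proof.
move=> y_j; apply: proj_ext => i; rewrite proj_glue (proj_on_piece i y_j).
by rewrite (proj_on_piece i (T_piece y_j)); case: eqP => [->|_]; rewrite ?T0.
Qed.

Lemma glue_W m x : x \in W A m -> glue x \in W A m.
Proof.
move=> x_m; rewrite /glue; apply: W_sum => // j _.
case: (ltrP m j.2) => lt_mj; first by rewrite (proj_W_vanish x_m lt_mj) T0; exact: W0.
by have [_ T_W] := piece_hdeg_W (T_piece (proj_piece j x)); apply: (W_le hA lt_mj T_W).
Qed.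

Lemma glue_hdeg n x : x \in hdeg A n -> glue x \in hdeg A n.
Proof.
move=> x_n; rewrite /glue; apply: hdeg_sum => // j _.
case: (eqVneq j.1 n) => j_n; last by rewrite (proj_hdeg_vanish x_n j_n) T0; exact: hdeg0.
by have [T_n _] := piece_hdeg_W (T_piece (proj_piece j x)); rewrite -j_n.
Qed.

Lemma glue_lin : (forall j a x y, x \in piece j -> y \in piece j ->
    T j (a *: x + y) = a *: T j x + T j y) ->
  forall a x y, glue (a *: x + y) = a *: glue x + glue y.
Proof.
move=> T_lin a x y; apply: proj_ext => j.
by rewrite proj_lin !proj_glue proj_lin T_lin //; apply: proj_piece.
Qed.
End Glue.

Lemma glue_cancel T T' : (forall j, T j 0 = 0) -> (forall j x, x \in piece j -> T j x \in piece j) ->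
  (forall j, T' j 0 = 0) -> (forall j x, x \in piece j -> T' j x \in piece j) ->
  (forall j y, y \in piece j -> T j (T' j y) = y) -> cancel (glue T') (glue T).
Proof.
move=> T0 T_piece T'0 T'_piece TT' x; apply: proj_ext => j.
by rewrite (proj_glue T0 T_piece) (proj_glue T'0 T'_piece) TT' //; exact: proj_piece.
Qed.
End SplittingProjections.

Lemma inverse_fmor (k : fieldType) (A : fdga k) (F G : A -> A) : is_fmor F ->
  cancel F G -> cancel G F -> (forall n x, x \in hdeg A n -> G x \in hdeg A n) ->
  (forall p x, x \in W A p -> G x \in W A p) -> is_fmor G.
Proof.
move=> F_mor FG GF G_deg G_W; have F_inj := can_inj FG.
split => //.
- by move=> a x y; apply: F_inj; rewrite GF (fm_lin F_mor) !GF.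
- by move=> x y; apply: F_inj; rewrite GF (fm_mul F_mor) !GF.
- by apply: F_inj; rewrite GF (fm_one F_mor).
- by move=> x; apply: F_inj; rewrite GF (fm_dd F_mor) GF.
Qed.

(* Given an r-splitting of [A], an automorphism [g] of E_r(A) =
   Gr^W A is lifted piecewise: on the piece of degree [n] and weight [p] the
   lift is [x |-> proj (n, p) (g x)], the unique representative of [g [x]] in
   that piece.  Multiplicativity and compatibility with [d] follow from those
   of [g] since [proj] is multiplicative and commutes with [d] on top weight. *)
Section LiftAutomorphism.
Variables (k : fieldType) (A : fdga k) (r : nat) (S : int -> int -> pred A)
  (g : int -> nat -> A -> A).
Hypothesis hA : is_fdga A.
Hypothesis lowA : lowers_weight A r.
Hypothesis hS : is_rsplitting r S.
Hypothesis g_aut : is_Er_aut r g.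

Local Notation proj := (proj hA hS).
Local Notation piece := (piece S).

Lemma Zr_intro p n x : x \in hdeg A n -> x \in W A p -> x \in Zr A r%:Z p n.
Proof. by move=> x_n x_p; rewrite (Zr_lowering lowA) x_n x_p. Qed.

Lemma Zr_elim p n x : x \in Zr A r%:Z p n -> x \in hdeg A n /\ x \in W A p.
Proof. by rewrite (Zr_lowering lowA) => /andP. Qed.

Lemma piece_Zr j x : x \in piece j -> x \in Zr A r%:Z j.2 j.1.
Proof. by move=> /(piece_hdeg_W hS) [x_n x_p]; apply: Zr_intro. Qed.

Lemma proj_boundary p n y : Br A r%:Z p n y -> proj (n, p) y = 0.
Proof.
move=> /(Br_lowering hA lowA) [y_n y_W]; apply: (proj_vanish hA hS y_n y_W).
by apply/orP; right; rewrite /=; lia.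
Qed.

Lemma proj_class p n x y : Br A r%:Z p n (x - y) -> proj (n, p) x = proj (n, p) y.
Proof. by move=> /proj_boundary /eqP; rewrite (projB hA hS) subr_eq0 => /eqP. Qed.

Lemma BrD p n y1 y2 : Br A r%:Z p n y1 -> Br A r%:Z p n y2 -> Br A r%:Z p n (y1 + y2).
Proof.
move=> /(Br_lowering hA lowA) [y1_n y1_W] /(Br_lowering hA lowA) [y2_n y2_W].
by apply/(Br_lowering hA lowA); split; [apply: hdegD|apply: WD].
Qed.

Lemma g_cycle p n x : x \in hdeg A n -> x \in W A p ->
  g p n x \in hdeg A n /\ g p n x \in W A p.
Proof. by move=> x_n x_p; apply: Zr_elim; apply: (ea_Z g_aut); apply: Zr_intro. Qed.

Lemma g0_boundary p n : Br A r%:Z p n (g p n 0).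
Proof.
have z0 : (0 : A) \in Zr A r%:Z p n by apply: Zr_intro; [exact: hdeg0|exact: W0].
have := ea_lin g_aut 1 z0 z0; rewrite !scale1r addr0 opprD addrA subrr add0r.
move=> /(Br_lowering hA lowA) [h_n h_W]; apply/(Br_lowering hA lowA).
by rewrite -[g p n 0]opprK hdegN // WN.
Qed.

Lemma g_proj p n x : x \in hdeg A n -> x \in W A p ->
  proj (n, p) (g p n x) = proj (n, p) (g p n (proj (n, p) x)).
Proof.
move=> x_n x_p; have [rx_n rx_W] := proj_remainder hA hS x_n x_p.
have px_Z : proj (n, p) x \in Zr A r%:Z p n by apply: piece_Zr (proj_piece hA hS (n, p) x).
have rx_Z : x - proj (n, p) x \in Zr A r%:Z p n.
  by apply: Zr_intro => //; apply: (W_le hA _ rx_W); lia.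
have split_x : 1 *: proj (n, p) x + (x - proj (n, p) x) = x by rewrite scale1r addrC subrK.
have := ea_lin g_aut 1 px_Z rx_Z; rewrite split_x scale1r => g_lin.
have g_rx : Br A r%:Z p n (g p n (x - proj (n, p) x)).
  by apply: (ea_wd g_aut rx_Z); apply/(Br_lowering hA lowA).
by apply: proj_class; move: (BrD g_lin g_rx); rewrite opprD addrA subrK.
Qed.

Definition lift_piece (j : nat * int) (y : A) : A := proj j (g j.2 j.1 y).

Lemma lift_piece0 j : lift_piece j 0 = 0.
Proof. by case: j => n p; apply: proj_boundary; exact: g0_boundary. Qed.

Lemma lift_piece_piece j x : x \in piece j -> lift_piece j x \in piece j.
Proof. by move=> _; exact: proj_piece. Qed.

Lemma lift_piece_lin j a x y : x \in piece j -> y \in piece j ->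
  lift_piece j (a *: x + y) = a *: lift_piece j x + lift_piece j y.
Proof.
case: j => n p /piece_Zr x_Z /piece_Zr y_Z.
by rewrite /lift_piece /= -(projZ hA hS) -(projD hA hS); apply: proj_class; exact: ea_lin.
Qed.

Definition lift_aut : A -> A := glue hA hS lift_piece.

Lemma lift_aut_piece j y : y \in piece j -> lift_aut y = lift_piece j y.
Proof. exact: (glue_piece hA hS lift_piece0 lift_piece_piece). Qed.

Lemma lift_aut_lin a x y : lift_aut (a *: x + y) = a *: lift_aut x + lift_aut y.
Proof. exact: (glue_lin hA hS lift_piece0 lift_piece_piece lift_piece_lin). Qed.

Lemma lift_aut_sum (I : Type) (s : seq I) (F : I -> A) :
  lift_aut (\sum_(i <- s) F i) = \sum_(i <- s) lift_aut (F i).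
Proof. exact: (lin_sum lift_aut_lin). Qed.

Lemma lift_aut_hdeg n x : x \in hdeg A n -> lift_aut x \in hdeg A n.
Proof. exact: (glue_hdeg hA hS lift_piece0 lift_piece_piece). Qed.

Lemma lift_aut_W p x : x \in W A p -> lift_aut x \in W A p.
Proof. exact: (glue_W hA hS lift_piece0 lift_piece_piece). Qed.

(* Decompose [x] and [y] into pieces and use [ea_mul] on each pair. *)
Lemma lift_aut_mul x y : lift_aut (x * y) = lift_aut x * lift_aut y.
Proof.
have [s [_ _ _ x_sum]] := proj_decomposes hA hS x.
have [s' [_ _ _ y_sum]] := proj_decomposes hA hS y.
have on_pieces i i' u v : u \in piece i -> v \in piece i' ->
    lift_aut (u * v) = lift_aut u * lift_aut v.
  case: i i' => [n p] [n' q] u_i v_i'.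
  rewrite (lift_aut_piece (pieceM hS u_i v_i')) (lift_aut_piece u_i) (lift_aut_piece v_i').
  have [u_n u_p] := piece_hdeg_W hS u_i; have [v_n v_q] := piece_hdeg_W hS v_i'.
  rewrite /lift_piece /= (proj_class (ea_mul g_aut (Zr_intro u_n u_p) (Zr_intro v_n v_q))).
  have [gu_n gu_p] := g_cycle u_n u_p; have [gv_n gv_q] := g_cycle v_n v_q.
  exact: (proj_mul hA hS gu_n gu_p gv_n gv_q).
rewrite x_sum y_sum mulr_suml lift_aut_sum !lift_aut_sum mulr_suml.
apply: eq_bigr => i _; rewrite mulr_sumr lift_aut_sum mulr_sumr.
by apply: eq_bigr => i' _; apply: on_pieces; exact: proj_piece.
Qed.

Lemma lift_aut_one : lift_aut 1 = 1.
Proof.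
have one_piece : (1 : A) \in piece (0%N, 0) by rewrite -(proj_one hA hS); exact: proj_piece.
rewrite (lift_aut_piece one_piece) /lift_piece /= (proj_class (ea_one g_aut)).
exact: proj_one.
Qed.

Lemma lift_aut_dd x : lift_aut (dd A x) = dd A (lift_aut x).
Proof.
have [s [_ _ _ ->]] := proj_decomposes hA hS x.
rewrite (dd_sum hA) !lift_aut_sum (dd_sum hA); apply: eq_bigr => j _.
case: j => n p; have u_j := proj_piece hA hS (n, p) x; set u := proj _ x in u_j *.
rewrite (lift_aut_piece (piece_d hS u_j)) (lift_aut_piece u_j) /lift_piece /=.
have [u_n u_p] := piece_hdeg_W hS u_j; rewrite (proj_class (ea_d g_aut (Zr_intro u_n u_p))).
have [gu_n gu_p] := g_cycle u_n u_p; exact: (proj_dd hA hS lowA gu_n gu_p).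
Qed.

Lemma lift_aut_Er : Er_is r lift_aut g.
Proof.
move=> p n x /Zr_elim [x_n x_p]; apply/(Br_lowering hA lowA).
have [gx_n gx_p] := g_cycle x_n x_p.
have d_n : lift_aut x - g p n x \in hdeg A n by apply: hdegB => //; apply: lift_aut_hdeg.
have d_p : lift_aut x - g p n x \in W A p by apply: WB => //; apply: lift_aut_W.
split => //; apply: (@proj_top_W _ _ _ _ hA hS _ _ _ d_n d_p).
rewrite (projB hA hS) (proj_glue hA hS lift_piece0 lift_piece_piece) /lift_piece /=.
by rewrite -(g_proj x_n x_p) subrr.
Qed.

(* The inverse is glued from inverses of [g] on the pieces, chosen by
   surjectivity of [g]. *)
Lemma preimage_exists (j : nat * int) (y : A) : exists x, y \in Zr A r%:Z j.2 j.1 ->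
  x \in Zr A r%:Z j.2 j.1 /\ Br A r%:Z j.2 j.1 (g j.2 j.1 x - y).
Proof.
case: (boolP (y \in Zr A r%:Z j.2 j.1)) => y_Z; last by exists 0.
by have [x x_Z x_y] := ea_surj g_aut y_Z; exists x.
Qed.

Definition preimage (j : nat * int) (y : A) : A :=
  proj1_sig (constructive_indefinite_description _ (preimage_exists j y)).

Lemma preimageP j y : y \in Zr A r%:Z j.2 j.1 ->
  preimage j y \in Zr A r%:Z j.2 j.1 /\ Br A r%:Z j.2 j.1 (g j.2 j.1 (preimage j y) - y).
Proof. by rewrite /preimage; case: (constructive_indefinite_description _ _). Qed.

Lemma lift_piece_inj0 n p z : z \in Zr A r%:Z p n ->
  proj (n, p) (g p n z) = 0 -> proj (n, p) z = 0.
Proof.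
move=> z_Z gz0; have [z_n z_p] := Zr_elim z_Z; have [gz_n gz_p] := g_cycle z_n z_p.
have gz_B : Br A r%:Z p n (g p n z).
  by apply/(Br_lowering hA lowA); split => //; exact: (proj_top_W gz_n gz_p gz0).
exact: proj_boundary (ea_inj g_aut z_Z gz_B).
Qed.

Definition inv_piece (j : nat * int) (y : A) : A := proj j (preimage j y).

Lemma inv_piece0 j : inv_piece j 0 = 0.
Proof.
case: j => n p; have z0 : (0 : A) \in Zr A r%:Z p n by apply: Zr_intro; [exact: hdeg0|exact: W0].
have [x_Z x_B] := @preimageP (n, p) _ z0; rewrite subr0 /= in x_B.
exact: lift_piece_inj0 x_Z (proj_boundary x_B).
Qed.

Lemma inv_piece_piece j x : x \in piece j -> inv_piece j x \in piece j.
Proof. by move=> _; exact: proj_piece. Qed.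

Lemma lift_inv_piece j y : y \in piece j -> lift_piece j (inv_piece j y) = y.
Proof.
case: j => n p y_j; have [x_Z x_B] := @preimageP (n, p) _ (piece_Zr y_j).
have [x_n x_p] := Zr_elim x_Z; rewrite /lift_piece /inv_piece /= -(g_proj x_n x_p).
by rewrite (proj_class x_B) (proj_on_piece hA hS _ y_j) eqxx.
Qed.

Lemma inv_lift_piece j y : y \in piece j -> inv_piece j (lift_piece j y) = y.
Proof.
case: j => n p y_j; set w := lift_piece (n, p) y.
have w_j : w \in piece (n, p) by exact: proj_piece.
have [x_Z x_B] := @preimageP (n, p) _ (piece_Zr w_j); set x := preimage _ w in x_Z x_B *.
have y_Z := piece_Zr y_j; have [x_n x_p] := Zr_elim x_Z; have [y_n y_p] := Zr_elim y_Z.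
have gx_w : proj (n, p) (g p n x) = w by rewrite (proj_class x_B) (proj_on_piece hA hS _ w_j) eqxx.
have xy_Z : x - y \in Zr A r%:Z p n by apply: Zr_intro; [apply: hdegB|apply: WB].
have := ea_lin g_aut (-1) y_Z x_Z; rewrite !scaleN1r (addrC (- y)) (addrC (- g p n y)).
move=> /proj_class; rewrite (projB hA hS) gx_w subrr => /(lift_piece_inj0 xy_Z) /eqP.
by rewrite (projB hA hS) subr_eq0 (proj_on_piece hA hS _ y_j) eqxx => /eqP.
Qed.

Lemma lift_aut_auto : is_fauto lift_aut.
Proof.
pose inv := glue hA hS inv_piece.
have lift_inv : cancel lift_aut inv :=
  glue_cancel hA hS inv_piece0 inv_piece_piece lift_piece0 lift_piece_piece inv_lift_piece.
have inv_lift : cancel inv lift_aut :=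
  glue_cancel hA hS lift_piece0 lift_piece_piece inv_piece0 inv_piece_piece lift_inv_piece.
have lift_mor : is_fmor lift_aut.
  by split; [exact: lift_aut_lin|exact: lift_aut_mul|exact: lift_aut_one
            |exact: lift_aut_hdeg|exact: lift_aut_dd|exact: lift_aut_W].
split => //; exists inv; split => //; apply: (inverse_fmor lift_mor lift_inv inv_lift).
- exact: (glue_hdeg hA hS inv_piece0 inv_piece_piece).
- exact: (glue_W hA hS inv_piece0 inv_piece_piece).
Qed.
End LiftAutomorphism.

(* (1) => (2): lift [gA] and [gB] along compatible splittings; the lifts
   commute with [f] because [f] commutes with the projections. *)
Lemma rsplitting_Er_surjective (k : fieldType) (r : nat) (A B : fdga k) (f : A -> B) :
  is_fdga A -> is_fdga B -> is_fmor f -> lowers_weight A r -> lowers_weight B r ->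
  admits_rsplitting r f -> Er_surjective r f.
Proof.
move=> hA hB f_mor lowA lowB [SA [SB [hSA hSB f_split]]] gA gB gA_aut gB_aut f_compat.
have proj_f j x : proj hB hSB j (f x) = f (proj hA hSA j x).
  apply: (proj_eq hB hSB (c := fun i => f (proj hA hSA i x))).
  have [s [s_uniq s_supp x_piece x_sum]] := proj_decomposes hA hSA x.
  exists s; split => //.
  - by move=> i /s_supp ->; rewrite (fmor0 f_mor).
  - by move=> i; apply: f_split; exact: x_piece i.
  - by rewrite {1}x_sum (fmor_sum f_mor).
exists (lift_aut gA hA hSA), (lift_aut gB hB hSB); split.
- exact: lift_aut_auto.
- exact: lift_aut_auto.
- move=> x; apply: (@proj_ext _ _ _ _ hB hSB) => j.
  rewrite proj_f (proj_glue hA hSA (lift_piece0 hA lowA hSA gA_aut) (lift_piece_piece gA hA hSA)).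
  rewrite (proj_glue hB hSB (lift_piece0 hB lowB hSB gB_aut) (lift_piece_piece gB hB hSB)) proj_f.
  case: j => n p; rewrite /lift_piece /= -proj_f; apply: (proj_class hB lowB hSB).
  by apply: f_compat; exact: (piece_Zr lowA hSA (proj_piece hA hSA (n, p) x)).
- exact: lift_aut_Er.
- exact: lift_aut_Er.
Qed.

Lemma two_not_root_of_unity (k : fieldType) : [pchar k] =i pred0 ->
  (2 : k) != 0 /\ (forall j, (0 < j)%N -> (2 : k) ^+ j != 1).
Proof.
move=> k0; have natr_neq0 n : (0 < n)%N -> n%:R != 0 :> k.
  by move=> n0; apply/negP => /(natf0_pchar n0) [p]; rewrite k0.
split => [|j j0]; first exact: natr_neq0.
rewrite -natrX -subr_eq0 -[1 : k]/(1%N%:R) -natrB ?expn_gt0 //.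
by apply: natr_neq0; rewrite subn_gt0 -{1}(expn0 2) ltn_exp2l.
Qed.

Lemma Er_surjective_bigrading_lift (k : fieldType) (r : nat) (A B : fdga k) (f : A -> B) :
  [pchar k] =i pred0 -> is_fdga A -> is_fdga B -> is_fmor f ->
  lowers_weight A r -> lowers_weight B r -> Er_surjective r f -> bigrading_lift r f.
Proof.
move=> k0 hA hB f_mor lowA lowB f_surj; have [two0 two_root] := two_not_root_of_unity k0.
have f_compat : Er_compat r f (bigrading A r 2) (bigrading B r 2).
  by move=> p n x _; rewrite /bigrading fmorZ // subrr; exact: Br0.
have [FA [FB [? ? ? ? ?]]] := f_surj _ _ (bigrading_is_Er_aut hA lowA two0)
  (bigrading_is_Er_aut hB lowB two0) f_compat.
by exists 2; split => //; exists FA, FB.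
Qed.

Lemma eigenvectors_independent (k : fieldType) (V : lmodType k) (phi : V -> V)
    (I : eqType) (s : seq I) (l : I -> k) (y : I -> V) :
  (forall a x y, phi (a *: x + y) = a *: phi x + phi y) ->
  uniq s -> {in s &, injective l} -> (forall i, i \in s -> phi (y i) = l i *: y i) ->
  \sum_(i <- s) y i = 0 -> forall i, i \in s -> y i = 0.
Proof.
move=> phi_lin; elim: s y => [|i0 s IH] y //= /andP [i0_s s_uniq] l_inj y_eig y_sum.
(* applying [phi - l i0] kills [y i0] and rescales the other terms *)
have sum_s : \sum_(i <- s) (l i - l i0) *: y i = 0.
  have : phi (\sum_(i <- i0 :: s) y i) - l i0 *: \sum_(i <- i0 :: s) y i = 0.
    by rewrite y_sum (lin0 phi_lin) scaler0 subrr.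
  rewrite (lin_sum phi_lin) scaler_sumr -sumrB big_cons (y_eig i0 (mem_head _ _)).
  rewrite subrr add0r => e; apply: etrans e; apply: eq_big_seq => i i_s.
  by rewrite y_eig ?inE ?i_s ?orbT // scalerBl.
have scaled0 := IH (fun i => (l i - l i0) *: y i) s_uniq
  (fun a b ha hb => l_inj a b (ltac:(by rewrite inE ha orbT)) (ltac:(by rewrite inE hb orbT)))
  (fun i hi => ltac:(by rewrite (linZ phi_lin) y_eig ?inE ?hi ?orbT // !scalerA mulrC)) sum_s.
have y_s0 i : i \in s -> y i = 0.
  move=> i_s; have /eqP := scaled0 i i_s; rewrite scaler_eq0 => /orP [|/eqP //].
  rewrite subr_eq0 => /eqP /l_inj eq_i; exfalso.
  by move: i0_s; rewrite -(eq_i (ltac:(by rewrite inE i_s orbT)) (mem_head _ _)) i_s.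
move=> i; rewrite inE => /orP [/eqP ->|]; last exact: y_s0.
by move: y_sum; rewrite big_cons big1_seq ?addr0.
Qed.

Lemma regroup_by_index (I : eqType) (V : zmodType) (S : I -> pred V) :
  (forall i, 0 \in S i) -> (forall i x y, x \in S i -> y \in S i -> x + y \in S i) ->
  forall L : seq (I * V), (forall u, u \in L -> u.2 \in S u.1) ->
  exists (s : seq I) (xs : I -> V), [/\ uniq s, forall i, xs i \in S i &
    \sum_(u <- L) u.2 = \sum_(i <- s) xs i].
Proof.
move=> S0 SD; elim=> [|[i v] L IH] hL.
  by exists [::], (fun _ => 0); split => //; rewrite !big_nil.
rewrite big_cons /=.
have [s [xs [s_uniq xs_S ->]]] := IH (fun u hu => hL u (ltac:(by rewrite inE hu orbT))).
have v_S : v \in S i by apply: (hL (i, v)); rewrite inE eqxx.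
case: (boolP (i \in s)) => i_s.
- exists s, (fun j => if j == i then v + xs i else xs j); split => //.
    by move=> j; case: eqP => [->|_]; [exact: SD v_S (xs_S i)|exact: xs_S].
  rewrite (bigD1_seq i) //= [in RHS](bigD1_seq i) //= eqxx addrA; congr (_ + _).
  by apply: eq_bigr => j /negbTE ->.
- exists (i :: s), (fun j => if j == i then v else xs j); split.
  + by rewrite /= i_s.
  + by move=> j; case: eqP => [->|_]; [exact: v_S|exact: xs_S].
  + rewrite big_cons eqxx; congr (_ + _); apply: eq_big_seq => j j_s.
    by case: eqP => // eq_j; move: i_s; rewrite -eq_j j_s.
Qed.

Lemma homogeneous_sum_vanish (k : fieldType) (A : fdga k) (I : eqType) (s : seq I)
    (deg : I -> nat) (xs : I -> A) :
  is_fdga A -> (forall i, xs i \in hdeg A (deg i)) -> \sum_(i <- s) xs i = 0 ->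
  forall n, \sum_(i <- s | deg i == n) xs i = 0.
Proof.
move=> hA xs_deg xs_sum n.
pose N := (\max_(i <- s) deg i).+1.
pose ys m := \sum_(i <- s | deg i == m) xs i.
have ys_deg m : ys m \in hdeg A m.
  rewrite /ys -big_filter; apply: hdeg_sum => // i.
  by rewrite mem_filter => /andP [/eqP <- _].
have ys_sum : \sum_(m < N) ys m = 0.
  apply: etrans xs_sum; rewrite -(big_mkord xpredT ys) /ys.
  rewrite (eq_bigr (fun m => \sum_(i <- s) (if m == deg i then xs i else 0))); last first.
    by move=> m _; rewrite big_mkcond; apply: eq_bigr => i _; rewrite eq_sym.
  rewrite exchange_big /=; apply: eq_big_seq => i i_s.
  by rewrite -big_mkcond big_nat1_eq /N ltnS leq_bigmax_seq.
case: (ltnP n N) => [n_N|N_n]; first exact: (hdeg_indep hA ys_deg ys_sum n_N).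
rewrite big1_seq // => i /andP [/eqP deg_i i_s]; move: N_n.
by rewrite /N -deg_i ltnNge leq_bigmax_seq.
Qed.

(* A filtered lift [Phi] of the bigrading automorphism [phi_alpha]
   acts on [W_p A^n] as [alpha^(nr+p)] modulo [W_{p-1}]; since [alpha] is not a
   root of unity these scalars are distinct for distinct [p], so [A^n] is the
   direct sum of the eigenspaces of [Phi], and the eigenspace for
   [alpha^(nr+p)] is the piece [A^{-p,n+p}] of an r-splitting. *)
Section EigenSplitting.
Variables (k : fieldType) (A : fdga k) (r : nat) (alpha : k) (Phi : A -> A).
Hypothesis hA : is_fdga A.
Hypothesis lowA : lowers_weight A r.
Hypothesis alpha0 : alpha != 0.
Hypothesis alpha_root : forall j, (0 < j)%N -> alpha ^+ j != 1.
Hypothesis Phi_mor : is_fmor Phi.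
Hypothesis Phi_lift : Er_is r Phi (bigrading A r alpha).

Local Notation lam := (bigrading_factor r alpha).

Lemma bigrading_factor_inj n p q : lam n p = lam n q -> p = q.
Proof.
rewrite /bigrading_factor => e.
have alpha_pq : alpha ^ (p - q) = 1.
  move: e; rewrite (_ : (n * r)%N%:Z + p = ((n * r)%N%:Z + q) + (p - q)); last by lia.
  rewrite expfzDr // => /eqP.
  by rewrite -{2}[alpha ^ _]mulr1 (inj_eq (mulfI _)) ?expfz_neq0 // => /eqP.
case E: (p - q) alpha_pq => [[|j]|j] h; first lia.
  by have := alpha_root (ltn0Sn j); rewrite -h eqxx.
move: h => /(congr1 GRing.inv); rewrite invrK invr1 => h.
by have := alpha_root (ltn0Sn j); rewrite h eqxx.
Qed.

Lemma Phi_on_weight n p x : x \in hdeg A n -> x \in W A p ->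
  Phi x - lam n p *: x \in hdeg A n /\ Phi x - lam n p *: x \in W A (p - 1).
Proof.
by move=> x_n x_W; apply/(Br_lowering hA lowA)/Phi_lift; rewrite (Zr_lowering lowA) x_n.
Qed.

Definition eigenvector n p (x : A) : Prop := x \in hdeg A n /\ Phi x = lam n p *: x.

Lemma eigenvector0 n p : eigenvector n p 0.
Proof. by split; [exact: hdeg0|rewrite (fmor0 Phi_mor) scaler0]. Qed.

Lemma eigenvectorZ n p c x : eigenvector n p x -> eigenvector n p (c *: x).
Proof.
by move=> [x_n Phi_x]; split; [exact: hdegZ|rewrite (fmorZ Phi_mor) Phi_x !scalerA mulrC].
Qed.

(* An eigenvector for [alpha^(nr+p)] has weight [<= p]: in any higher
   weight [q > p] its class in Gr_q would be an eigenvector for the distinct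
   eigenvalue [alpha^(nr+q)], hence zero. *)
Lemma eigenvector_weight n p x : eigenvector n p x -> x \in W A p.
Proof.
move=> [x_n Phi_x]; have [q x_q] := W_exh hA x.
case: (lerP q p) => [le_qp|lt_pq]; first exact: (W_le hA le_qp x_q).
suff drop_weight (j : nat) : x \in W A (p + j%:Z) -> x \in W A p.
  by apply: (drop_weight `|q - p|%N); have -> : p + (`|q - p|%N)%:Z = q by lia.
elim: j => [|j IH]; first by rewrite addr0.
move=> x_W; apply: IH.
have [_] := Phi_on_weight x_n x_W; rewrite Phi_x -scalerBl.
have ne : lam n p - lam n (p + (j.+1)%:Z) != 0.
  by rewrite subr_eq0; apply/eqP => /bigrading_factor_inj; lia.
move=> /(WZ hA (lam n p - lam n (p + (j.+1)%:Z))^-1); rewrite scalerA mulVf // scale1r.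
by rewrite (_ : p + (j.+1)%:Z - 1 = p + j%:Z) //; lia.
Qed.

(* Every element of [W_m A^n] is a sum of eigenvectors of weights [<= m];
   by induction on [m], starting below the regularity bound of [A^n]. *)
Lemma eigen_decomposition n m y : y \in hdeg A n -> y \in W A m ->
  exists (s : seq int) (ys : int -> A), [/\ forall p, eigenvector n p (ys p),
    forall p, p \in s -> p <= m & y = \sum_(p <- s) ys p].
Proof.
have [q0 reg_q0] := W_reg hA n.
move: m y; suff H (j : nat) m y : m <= q0 + j%:Z -> y \in hdeg A n -> y \in W A m ->
  exists (s : seq int) (ys : int -> A), [/\ forall p, eigenvector n p (ys p),
    forall p, p \in s -> p <= m & y = \sum_(p <- s) ys p].
  by move=> m y y_n y_W; apply: (H `|m - q0|%N) => //; lia.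
elim: j m y => [|j IH] m y le_m y_n y_W.
  have -> : y = 0 by apply: reg_q0 => //; apply: (W_le hA _ y_W); lia.
  by exists [::], (fun _ => 0); split => //; [exact: eigenvector0|rewrite big_nil].
(* [z = Phi y - lam m y] has lower weight; decompose it and solve for [y] *)
have [z_n z_W] := Phi_on_weight y_n y_W.
have [s [zs [zs_eig s_le z_sum]]] := IH (m - 1) _ (ltac:(lia)) z_n z_W.
have lam_ne p : p \in s -> lam n p - lam n m != 0.
  by move=> /s_le p_le; rewrite subr_eq0; apply/eqP => /bigrading_factor_inj; lia.
pose ys p := (lam n p - lam n m)^-1 *: zs p.
pose ym := y - \sum_(p <- s) ys p.
have ys_eig p : eigenvector n p (ys p) by apply: eigenvectorZ.
have ym_eig : eigenvector n m ym.
  split; first by apply: hdegB => //; apply: hdeg_sum => // p _; exact: (ys_eig p).1.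
  have z_ys : Phi y - lam n m *: y = \sum_(p <- s) (Phi (ys p) - lam n m *: ys p).
    rewrite z_sum; apply: eq_big_seq => p p_s.
    by rewrite (ys_eig p).2 -scalerBl /ys scalerA mulfV ?scale1r // lam_ne.
  rewrite /ym (fmorB Phi_mor) (fmor_sum Phi_mor) scalerBr scaler_sumr.
  have -> : Phi y = lam n m *: y + \sum_(p <- s) (Phi (ys p) - lam n m *: ys p).
    by rewrite -z_ys addrC subrK.
  by rewrite sumrB addrCA addrAC subrr add0r.
exists (m :: s), (fun p => if p == m then ym else ys p); split.
- by move=> p; case: eqP => [->|_].
- by move=> p; rewrite inE => /orP [/eqP -> // | /s_le]; lia.
- rewrite big_cons eqxx (eq_big_seq ys) ?subrK // => p /s_le p_le.
  by case: eqP => //; lia.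
Qed.

Definition eigen_split (a b : int) : pred A := [pred x | if 0 <= a + b then
  (x \in hdeg A (absz (a + b))) && (Phi x == lam (absz (a + b)) (- a) *: x) else x == 0].

Lemma eigen_splitI a b (n : nat) x : a + b = n%:Z -> eigenvector n (- a) x ->
  x \in eigen_split a b.
Proof. by move=> e [x_n Phi_x]; rewrite inE /= e /= x_n Phi_x eqxx. Qed.

Lemma eigen_splitP a b x : x \in eigen_split a b ->
  x = 0 \/ exists n : nat, a + b = n%:Z /\ eigenvector n (- a) x.
Proof.
rewrite inE /=; case: ifP => ab_ge0; last by move/eqP; left.
move=> /andP [x_n /eqP Phi_x]; right; exists (absz (a + b)).
by rewrite gez0_abs.
Qed.

Lemma eigen_split0 a b : 0 \in eigen_split a b.
Proof. by rewrite inE /=; case: ifP => _ //; rewrite hdeg0 // (fmor0 Phi_mor) scaler0 eqxx. Qed.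

Lemma eigen_split_weight n p x : x \in eigen_split (- p) (n%:Z + p) <-> eigenvector n p x.
Proof.
split.
- move=> /eigen_splitP [->|[n' [e x_eig]]]; first exact: eigenvector0.
  have -> : n = n' by lia.
  by rewrite opprK in x_eig.
- by move=> x_eig; apply: (eigen_splitI (n := n)); [lia|rewrite opprK].
Qed.

Lemma eigen_split_sub a b : is_subspace (eigen_split a b).
Proof.
split; first exact: eigen_split0.
move=> c x y; rewrite !inE /=; case: ifP => _.
  move=> /andP [x_n /eqP Phi_x] /andP [y_n /eqP Phi_y].
  by rewrite hdegD ?hdegZ //= (fm_lin Phi_mor) Phi_x Phi_y scalerDr !scalerA mulrC eqxx.
by move=> /eqP -> /eqP ->; rewrite scaler0 addr0.
Qed.

Lemma eigen_split_d a b x :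
  x \in eigen_split a b -> dd A x \in eigen_split (a + r%:Z) (b - r%:Z + 1).
Proof.
move=> /eigen_splitP [->|[n [e [x_n Phi_x]]]]; first by rewrite dd0 // eigen_split0.
apply: (eigen_splitI (n := n.+1)); first lia.
split; first exact: dd_hdeg.
rewrite (fm_dd Phi_mor) Phi_x ddZ //; congr (_ *: _); rewrite /bigrading_factor.
by congr (_ ^ _); rewrite mulSn; lia.
Qed.

Lemma eigen_split_mul a b a' b' x y : x \in eigen_split a b -> y \in eigen_split a' b' ->
  x * y \in eigen_split (a + a') (b + b').
Proof.
move=> /eigen_splitP [->|[n [e [x_n Phi_x]]]]; first by rewrite mul0r eigen_split0.
move=> /eigen_splitP [->|[n' [e' [y_n Phi_y]]]]; first by rewrite mulr0 eigen_split0.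
apply: (eigen_splitI (n := (n + n')%N)); first lia.
split; first exact: mul_hdeg.
rewrite (fm_mul Phi_mor) Phi_x Phi_y -scalerAl -scalerAr scalerA; congr (_ *: _).
by rewrite /bigrading_factor -expfzDr //; congr (_ ^ _); rewrite mulnDl; lia.
Qed.

Lemma eigen_split_W m n x : (x \in hdeg A n /\ x \in W A m) <->
  exists (s : seq int) (xs : int -> A),
    (forall p, p \in s -> p <= m /\ xs p \in eigen_split (- p) (n%:Z + p)) /\
    x = \sum_(p <- s) xs p.
Proof.
split.
- move=> [x_n x_W]; have [s [xs [xs_eig s_le ->]]] := eigen_decomposition x_n x_W.
  by exists s, xs; split => // p p_s; split; [exact: s_le|exact/eigen_split_weight].
- move=> [s [xs [xs_split ->]]]; split.
    by apply: hdeg_sum => // p /xs_split [_ /eigen_split_weight []].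
  apply: W_sum => // p /xs_split [le_pm /eigen_split_weight x_eig].
  exact: (W_le hA le_pm (eigenvector_weight x_eig)).
Qed.

Definition eigen_sum (x : A) : Prop := exists L : seq ((int * int) * A),
  (forall u, u \in L -> u.2 \in eigen_split u.1.1 u.1.2) /\ x = \sum_(u <- L) u.2.

Lemma eigen_sum_big (J : Type) (js : seq J) (F : J -> A) :
  (forall j, eigen_sum (F j)) -> eigen_sum (\sum_(j <- js) F j).
Proof.
move=> F_sum; elim: js => [|j js [L [L_split e]]]; first by exists [::]; rewrite !big_nil.
have [L1 [L1_split e1]] := F_sum j; exists (L1 ++ L); split.
  by move=> u; rewrite mem_cat => /orP [/L1_split|/L_split].
by rewrite big_cons big_cat e1 e.
Qed.

(* Spanning: decompose into homogeneous components, then into eigenvectors,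
   and regroup the resulting sum by index. *)
Lemma eigen_split_span (x : A) : exists (s : seq (int * int)) (xs : int * int -> A),
  (forall i, xs i \in eigen_split i.1 i.2) /\ x = \sum_(i <- s) xs i.
Proof.
have [L [L_split ->]] : eigen_sum x.
  have [N [xs [xs_deg ->]]] := hdeg_span hA x.
  apply: eigen_sum_big => i; have [m xs_W] := W_exh hA (xs i).
  have [s [ys [ys_eig _ ->]]] := eigen_decomposition (xs_deg i) xs_W.
  apply: eigen_sum_big => p; exists [:: ((- p, i%:Z + p), ys p)]; split.
    by move=> u; rewrite inE => /eqP -> /=; apply/eigen_split_weight.
  by rewrite big_cons big_nil addr0.
have split_add i x1 x2 :
    x1 \in eigen_split i.1 i.2 -> x2 \in eigen_split i.1 i.2 -> x1 + x2 \in eigen_split i.1 i.2.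
  exact: (subspaceD (eigen_split_sub i.1 i.2)).
have [s [xs [_ xs_split e]]] := regroup_by_index (fun i => eigen_split0 i.1 i.2) split_add L_split.
by exists s, xs.
Qed.

(* Independence: group by total degree, then use independence of eigenvectors
   with the distinct eigenvalues [alpha^(nr - a)]. *)
Lemma eigen_split_indep (s : seq (int * int)) (xs : int * int -> A) : uniq s ->
  (forall i, xs i \in eigen_split i.1 i.2) -> \sum_(i <- s) xs i = 0 ->
  forall i, i \in s -> xs i = 0.
Proof.
move=> s_uniq xs_split xs_sum i0 i0_s.
pose deg (i : int * int) := absz (i.1 + i.2).
have neg0 i : (0 <= i.1 + i.2) = false -> xs i = 0.
  by move=> hi; case: (eigen_splitP (xs_split i)) => // [[n [e _]]]; move: hi; rewrite e.
have xs_deg i : xs i \in hdeg A (deg i).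
  case: (eigen_splitP (xs_split i)) => [->|[n [e [x_n _]]]]; first exact: hdeg0.
  by rewrite /deg e.
case: (eigen_splitP (xs_split i0)) => [//|[n0 [e0 [_ _]]]].
pose T := [seq i <- s | (deg i == n0) && (0 <= i.1 + i.2)].
have T_sum : \sum_(i <- T) xs i = 0.
  rewrite big_filter; apply: etrans (homogeneous_sum_vanish hA xs_deg xs_sum n0).
  by rewrite big_mkcondr; apply: eq_bigr => i _; case: ifP => // /neg0 ->.
apply: (eigenvectors_independent (fm_lin Phi_mor) (l := fun i => lam n0 (- i.1))
  (filter_uniq _ s_uniq) _ _ T_sum).
- move=> [a b] [a' b']; rewrite !mem_filter /= => /andP [/andP [/eqP d1 p1] _].
  move=> /andP [/andP [/eqP d2 p2] _] /bigrading_factor_inj e.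
  have e1 : a + b = n0%:Z by rewrite -d1 /deg /= gez0_abs.
  have e2 : a' + b' = n0%:Z by rewrite -d2 /deg /= gez0_abs.
  congr pair; lia.
- move=> [a b]; rewrite mem_filter /= => /andP [/andP [/eqP d1 _] _].
  case: (eigen_splitP (xs_split (a, b))) => [->|[n [e [_ Phi_x]]]].
    by rewrite (fmor0 Phi_mor) scaler0.
  by move: d1; rewrite /deg /= e => <-.
- by rewrite mem_filter i0_s /deg e0 eqxx /=.
Qed.

Lemma eigen_split_rsplitting : is_rsplitting r eigen_split.
Proof.
split.
- exact: eigen_split_sub.
- exact: eigen_split_span.
- exact: eigen_split_indep.
- exact: eigen_split_d.
- exact: eigen_split_mul.
- exact: eigen_split_W.
Qed.
End EigenSplitting.

(* (3) => (1): the eigenspace splittings of [A] and [B] are compatible with [f]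
   because [f Phi^A = Phi^B f]. *)
Lemma bigrading_lift_rsplitting (k : fieldType) (r : nat) (A B : fdga k) (f : A -> B) :
  is_fdga A -> is_fdga B -> is_fmor f -> lowers_weight A r -> lowers_weight B r ->
  bigrading_lift r f -> admits_rsplitting r f.
Proof.
move=> hA hB f_mor lowA lowB [alpha [alpha0 alpha_root [FA [FB [FA_aut FB_aut f_FA FA_lift FB_lift]]]]].
exists (eigen_split r alpha FA), (eigen_split r alpha FB); split.
- exact: (eigen_split_rsplitting hA lowA alpha0 alpha_root FA_aut.1 FA_lift).
- exact: (eigen_split_rsplitting hB lowB alpha0 alpha_root FB_aut.1 FB_lift).
move=> a b x /eigen_splitP [->|[n [e [x_n FA_x]]]].
  by rewrite (fmor0 f_mor); apply: eigen_split0 => //; exact: FB_aut.1.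
apply: (eigen_splitI (n := n)) => //; split; first exact: (fm_deg f_mor x_n).
by rewrite -f_FA FA_x (fmorZ f_mor).
Qed.

Theorem lemma2p19 (k : fieldType) (r : nat) (A B : fdga k) (f : A -> B) :
  [pchar k] =i pred0 ->
  is_fdga A -> is_fdga B -> is_fmor f ->
  is_fg_Er_cofibrant A r -> is_fg_Er_cofibrant B r ->
  (admits_rsplitting r f <-> Er_surjective r f) /\
  (Er_surjective r f <-> bigrading_lift r f).
Proof.
move=> k0 hA hB f_mor cofA cofB.
have lowA := fg_cofibrant_lowers_weight hA cofA.
have lowB := fg_cofibrant_lowers_weight hB cofB.
have one_two := rsplitting_Er_surjective hA hB f_mor lowA lowB.
have two_three := Er_surjective_bigrading_lift k0 hA hB f_mor lowA lowB.
have three_one := bigrading_lift_rsplitting hA hB f_mor lowA lowB.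
split; split.
- exact: one_two.
- by move=> /two_three /three_one.
- exact: two_three.
- by move=> /three_one /one_two.
Qed.
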